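(* Let $G$ be a finite nilpotent group, $f\in\mathrm{Aut}(G)$, and for each prime $p$ dividing $|G|$ let $S_p$ be the (unique) Sylow $p$-subgroup of $G$. Suppose $Q=\mathcal{Q}(G,f)$ is connected. Then $Q$ is simply connected if and only if $\mathcal{Q}(S_p,f|_{S_p})$ is simply connected for every prime $p$ dividing $|G|$.
   Context: A quandle is a set $Q$ with a binary operation $*$ such that every left translation $L_x:y\mapsto x*y$ is bijective, $x*(y*z)=(x*y)*(x*z)$ and $x*x=x$; $Q$ is connected if $\langle L_x:x\in Q\rangle$ is transitive on $Q$. For a group $G$ and $f\in\mathrm{Aut}(G)$, $\mathcal{Q}(G,f)$ is $G$ with $x*y=xf(x^{-1}y)$ (note $f(S_p)=S_p$). For a set $S$, a quandle cocycle with values in $\mathrm{Sym}_S$ is $\theta:Q\times Q\to\mathrm{Sym}_S$ with $\theta_{x*y,x*z}\theta_{x,z}=\theta_{x,y*z}\theta_{y,z}$ and $\theta_{x,x}=1$; it is cohomologous to the trivial cocycle if there is $\gamma:Q\to\mathrm{Sym}_S$ with $\theta_{x,y}=\gamma_{x*y}\gamma_y^{-1}$ for all $x,y$. $Q$ is simply connected if it is connected and, for every set $S$, every such cocycle is cohomologous to the trivial cocycle. *)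

From mathcomp Require Import all_boot all_fingroup all_solvable.
From Stdlib Require Import Relations.
Set Implicit Arguments. Unset Strict Implicit. Unset Printing Implicit Defensive.
Import GroupScope.

(* The quandle Q(G,f): operation x * y = x f(x^-1 y), carried by a subset A
   of a finite group type gT (A = G, or A = a Sylow subgroup S_p). *)
Definition qop (gT : finGroupType) (f : {perm gT}) (x y : gT) : gT :=
  x * f (x^-1 * y).

(* One step of the action of a generator L_x (x in A) or of its inverse. *)
Definition lstep (T : finType) (A : {set T}) (op : T -> T -> T) (y z : T) : Prop :=
  exists2 x, x \in A & (z = op x y \/ y = op x z).

(* Connected: the group <L_x : x in A> acts transitively on A. *)
Definition qconnected (T : finType) (A : {set T}) (op : T -> T -> T) : Prop :=
  forall a b, a \in A -> b \in A -> clos_refl_trans T (lstep A op) a b.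

(* A quandle cocycle with values in Sym_S (product in Sym_S = composition). *)
Definition qcocycle (T : finType) (A : {set T}) (op : T -> T -> T) (S : Type)
  (theta : T -> T -> S -> S) : Prop :=
  [/\ (forall x y, x \in A -> y \in A -> bijective (theta x y)),
      (forall x y z, x \in A -> y \in A -> z \in A -> forall s : S,
          theta (op x y) (op x z) (theta x z s) = theta x (op y z) (theta y z s))
    & (forall x, x \in A -> forall s : S, theta x x s = s)].

(* theta is cohomologous to the trivial cocycle: theta_{x,y} = gamma_{x*y} gamma_y^{-1}. *)
Definition qcobound (T : finType) (A : {set T}) (op : T -> T -> T) (S : Type)
  (theta : T -> T -> S -> S) : Prop :=
  exists gamma : T -> S -> S,
    (forall y, y \in A -> bijective (gamma y)) /\
    (forall x y, x \in A -> y \in A -> forall s : S,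
        theta x y (gamma y s) = gamma (op x y) s).

Definition qsimply_connected (T : finType) (A : {set T}) (op : T -> T -> T) : Prop :=
  qconnected A op /\
  forall (S : Type) (theta : T -> T -> S -> S), qcocycle A op theta -> qcobound A op theta.

From mathcomp Require Import all_boot all_fingroup all_solvable.
From Stdlib Require Import Relations ClassicalEpsilon.
Set Implicit Arguments. Unset Strict Implicit. Unset Printing Implicit Defensive.
Import GroupScope.

(* Simple connectivity passes from Q(A, f) to an f-stable direct factor H of A = H x K,
   because the projection onto H is a quandle retraction.  For the converse it suffices,
   by induction on the primes dividing |G|, to treat A = H x K with |H|, |K| coprime and
   Q(H), Q(K) simply connected.  Given a cocycle th, let words in the L_x^(+-1) act on the
   extension A x_th S.  The words L_x L_1^-1 and their conjugates by L_1 act on A as left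
   translations, and translation words over H commute with those over K: their commutator
   acts trivially on A, hence is central, and so do their |H|-th and |K|-th powers, whose
   exponents are coprime.  So L_x composed with the transport along an H-word followed by a K-word
   splits into an H-part and a K-part, each of which fixes the fibre over 1 as soon as it
   fixes 1, since th is a coboundary on H and on K.  Transport of the fibre over 1 therefore
   does not depend on the chosen words and trivialises th. *)

Lemma qcocycleS (T : finType) (A B : {set T}) (op : T -> T -> T) (S : Type)
    (th : T -> T -> S -> S) :
  B \subset A -> qcocycle A op th -> qcocycle B op th.
Proof.
move=> /subsetP sBA [th_bij th_op th1].
by split=> [x y Bx By | x y z Bx By Bz | x Bx];
  [apply: th_bij | apply: th_op | apply: th1]; apply: sBA.
Qed.

Section Retract.
Variables (T : finType) (A B : {set T}) (op : T -> T -> T) (p : T -> T).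
Hypotheses (sBA : B \subset A) (opA : {in A, forall x z, (op x z \in A) = (z \in A)})
  (pB : {in A, forall x, p x \in B}) (p_id : {in B, p =1 id})
  (p_op : {in A &, forall x y, p (op x y) = op (p x) (p y)}).

Lemma qconnected_retract : qconnected A op -> qconnected B op.
Proof.
move=> conA a b Ba Bb; rewrite -(p_id Ba) -(p_id Bb).
suff path_p : forall y z, clos_refl_trans T (lstep A op) y z -> y \in A ->
    z \in A /\ clos_refl_trans T (lstep B op) (p y) (p z).
  by case: (path_p a b (conA a b (subsetP sBA _ Ba) (subsetP sBA _ Bb))) => //;
     exact: (subsetP sBA).
move=> y z; elim=> {y z} [y z [x Ax yz] | y | y1 y2 y3 _ IH12 _ IH23] Ay.
- have Az : z \in A by case: yz => [-> | yE]; rewrite ?opA // -(opA Ax) -yE.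
  split=> //; apply: rt_step; exists (p x); first exact: pB.
  by case: yz => [-> | ->]; [left | right]; rewrite p_op.
- by split=> //; apply: rt_refl.
- have [Ay2 c12] := IH12 Ay; have [Ay3 c23] := IH23 Ay2.
  by split=> //; apply: rt_trans c23.
Qed.

Lemma qsimply_connected_retract : qsimply_connected A op -> qsimply_connected B op.
Proof.
case=> conA cobA; split; first exact: qconnected_retract.
move=> S th [thB thop th1].
have cocA : qcocycle A op (fun x y => th (p x) (p y)).
  split=> [x y Ax Ay | x y z Ax Ay Az s | x Ax s]; rewrite ?p_op ?opA //;
    by [apply: thB; apply: pB | apply: thop; apply: pB | apply: th1; apply: pB].
have [gam [gamB gamop]] := cobA S _ cocA.
exists gam; split=> [y By | x y Bx By s]; first by apply: gamB; apply: (subsetP sBA).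
by have := gamop x y (subsetP sBA _ Bx) (subsetP sBA _ By) s; rewrite !p_id.
Qed.

End Retract.

Lemma qsimply_connected_card_le1 (T : finType) (A : {set T}) (op : T -> T -> T) :
  #|A| <= 1 -> qsimply_connected A op.
Proof.
move=> /card_le1_eqP A_eq; split=> [a b Aa Ab | S th [_ _ th1]].
  by rewrite (A_eq a b) //; apply: rt_refl.
exists (fun _ => id); split=> [y _ | x y Ax Ay s]; first by exists id.
by rewrite (A_eq x y) // th1.
Qed.

Lemma iter_coprime_id (X : Type) (h : X -> X) n m : 0 < n -> coprime n m ->
  iter n h =1 id -> iter m h =1 id -> h =1 id.
Proof.
move=> n_gt0 co_nm hn hm x.
have iterM_id k q : iter k h =1 id -> iter (q * k) h x = x.
  by move=> hk; rewrite iterM; elim: q => //= q ->; apply: hk.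
have [u _] := Bezoutl m n_gt0; rewrite (eqP co_nm) => /dvdnP[q Eq].
by have := iterM_id _ q hn; rewrite -Eq iterD iterM_id.
Qed.

Section CommutatorPowers.
Variables (X : Type) (a a' b b' : X -> X).
Local Notation c := (fun y => a (b (a' (b' y)))).

Lemma iter_commutator n : cancel b b' -> cancel b' b -> (forall x, c (a x) = a (c x)) ->
  forall x, iter n a (b (iter n a' (b' x))) = iter n c x.
Proof.
move=> bK bKV ca.
have iter_ca k y : iter k c (a y) = a (iter k c y) by elim: k => //= k ->; rewrite ca.
elim: n => [|n IHn] x; first by rewrite /= bKV.
by rewrite iterS iterSr -(bK (a' (b' x))) IHn -iter_ca iterSr.
Qed.

End CommutatorPowers.

Section CoprimeCommutation.
Variables (X : Type) (a a' b b' : X -> X).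
Local Notation c := (fun y => a (b (a' (b' y)))).
Local Notation c' := (fun y => b (a (b' (a' y)))).

Lemma commute_of_coprime_powers n m :
    cancel a a' -> cancel a' a -> cancel b b' -> cancel b' b ->
    (forall x, c (a x) = a (c x)) -> (forall x, c' (b x) = b (c' x)) ->
    0 < n -> coprime n m ->
    (forall x, iter n a (b x) = b (iter n a x)) -> (forall x, iter m b (a x) = a (iter m b x)) ->
  forall x, a (b x) = b (a x).
Proof.
move=> aK aKV bK bKV cab cba n_gt0 co_nm an_b bm_a.
have iterK (g g' : X -> X) k : cancel g' g -> cancel (iter k g') (iter k g).
  by move=> gK; elim: k => //= k IHk x; rewrite iterSr gK IHk.
have cn : iter n c =1 id.
  by move=> x; rewrite -(@iter_commutator _ a a' b b') // an_b (iterK _ _ _ aKV) bKV.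
have c'm : iter m c' =1 id.
  by move=> x; rewrite -(@iter_commutator _ b b' a a') // bm_a (iterK _ _ _ bKV) aKV.
have cm : iter m c =1 id.
  by move=> x; rewrite -[x in LHS]c'm (iterK c c') // => y; rewrite bK aK bKV aKV.
have c_id := iter_coprime_id n_gt0 co_nm cn cm.
by move=> x; rewrite -[RHS]c_id /= bK aK.
Qed.

End CoprimeCommutation.

Section Words.
Variable T : finType.
Implicit Types (w : seq (T * bool)) (B : {set T}).

Definition winv w := rev [seq (a.1, ~~ a.2) | a <- w].
Definition wpow w m := flatten (nseq m w).
Definition word_over B w := all (fun a => a.1 \in B) w.

Lemma winv_cat w1 w2 : winv (w1 ++ w2) = winv w2 ++ winv w1.
Proof. by rewrite /winv map_cat rev_cat. Qed.

Lemma word_over_cat B w1 w2 : word_over B (w1 ++ w2) = word_over B w1 && word_over B w2.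
Proof. exact: all_cat. Qed.

Lemma word_over_winv B w : word_over B (winv w) = word_over B w.
Proof. by rewrite /word_over /winv all_rev all_map. Qed.

Lemma word_overS B (C : {set T}) w : B \subset C -> word_over B w -> word_over C w.
Proof. by move=> sBC /allP Bw; apply/allP=> a /Bw; apply: (subsetP sBC). Qed.

Variables (X : Type) (act actV : T -> X -> X).

Definition letter_act (a : T * bool) := if a.2 then act a.1 else actV a.1.

(* A word acts as the composite of its letters, the head acting last; the letter
   (x, false) stands for the inverse of act x. *)
Fixpoint wact w x := if w is a :: w' then letter_act a (wact w' x) else x.

Lemma wact_cat w1 w2 x : wact (w1 ++ w2) x = wact w1 (wact w2 x).
Proof. by elim: w1 => //= a w1 ->. Qed.

Lemma wact_wpow w m x : wact (wpow w m) x = iter m (wact w) x.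
Proof. by elim: m => //= m <-; rewrite wact_cat. Qed.

Variable B : {set T}.
Hypotheses (actK : {in B, forall y, cancel (act y) (actV y)})
  (actVK : {in B, forall y, cancel (actV y) (act y)}).

Lemma wact_winvK w : word_over B w -> cancel (wact w) (wact (winv w)).
Proof.
elim: w => //= -[y b] w IHw /andP[/= By Bw] x.
rewrite /winv /= rev_cons -cats1 wact_cat /= /letter_act /=.
by case: b => /=; rewrite ?actK ?actVK //; apply: IHw.
Qed.

Lemma wact_winvKV w : word_over B w -> cancel (wact (winv w)) (wact w).
Proof.
elim: w => //= -[y b] w IHw /andP[/= By Bw] x.
rewrite /winv /= rev_cons -cats1 wact_cat /= IHw // /letter_act /=.
by case: b => /=; rewrite ?actK ?actVK.
Qed.

End Words.

Definition dword (gT : finGroupType) (x : gT) : seq (gT * bool) := [:: (x, true); (1, false)].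
Definition conj1 (gT : finGroupType) (w : seq (gT * bool)) :=
  [:: (1, true)] ++ w ++ [:: (1, false)].

Definition qopV (gT : finGroupType) (f : {perm gT}) (x y : gT) : gT := x * f^-1 (x^-1 * y).

Section PermStable.
Variables (gT : finGroupType) (f : {perm gT}) (B : {set gT}).
Hypothesis fB : f @: B = B.

Lemma mem_perm_stable x : (f x \in B) = (x \in B).
Proof. by rewrite -{1}fB mem_imset //; apply: perm_inj. Qed.

Lemma mem_perm_stableV x : (f^-1 x \in B) = (x \in B).
Proof. by rewrite -mem_perm_stable permKV. Qed.

End PermStable.

Lemma char_perm_stable (gT : finGroupType) (G H : {group gT}) (f : {perm gT}) :
  f \in Aut G -> H \char G -> f @: H = H.
Proof.
move=> AutGf /andP[_ /forall_inP/(_ f AutGf) sfHH].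
by apply/eqP; rewrite eqEcard sfHH (card_imset _ perm_inj) leqnn.
Qed.

Section GroupQuandle.
Variables (gT : finGroupType) (f : {perm gT}).
Implicit Types (x y z : gT) (B : {group gT}).

Lemma qopK x : cancel (qop f x) (qopV f x).
Proof. by move=> z; rewrite /qop /qopV mulKg permK mulKVg. Qed.

Lemma qopVK x : cancel (qopV f x) (qop f x).
Proof. by move=> z; rewrite /qop /qopV mulKg permKV mulKVg. Qed.

Lemma qop1 z : qop f 1 z = f z.
Proof. by rewrite /qop invg1 !mul1g. Qed.

Lemma qopV1 z : qopV f 1 z = f^-1 z.
Proof. by rewrite /qopV invg1 !mul1g. Qed.

Lemma qop_mem B x z : f @: B = B -> x \in B -> (qop f x z \in B) = (z \in B).
Proof. by move=> fB Bx; rewrite /qop groupMl // mem_perm_stable // groupMl ?groupV. Qed.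

Lemma qopV_mem B x z : f @: B = B -> x \in B -> (qopV f x z \in B) = (z \in B).
Proof. by move=> fB Bx; rewrite -(qop_mem _ fB Bx) qopVK. Qed.

Variable A : {group gT}.
Hypothesis fM : {in A &, {morph f : x y / x * y}}.

Lemma perm_morph1 : f 1 = 1.
Proof. by apply: (mulIg (f 1)); rewrite -fM ?mulg1 ?mul1g. Qed.

Lemma perm_morphV x : x \in A -> f x^-1 = (f x)^-1.
Proof. by move=> Ax; apply: (mulgI (f x)); rewrite -fM ?groupV // !mulgV perm_morph1. Qed.

Lemma qopE x z : x \in A -> z \in A -> qop f x z = x * (f x)^-1 * f z.
Proof. by move=> Ax Az; rewrite /qop fM ?groupV // perm_morphV // mulgA. Qed.

Hypothesis fA : f @: A = A.

Lemma qop_dist x y z : x \in A -> y \in A -> z \in A ->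
  qop f x (qop f y z) = qop f (qop f x y) (qop f x z).
Proof.
move=> Ax Ay Az; rewrite /qop.
have Axy : x^-1 * y \in A by rewrite groupM ?groupV.
have Axz : x^-1 * z \in A by rewrite groupM ?groupV.
have Ayz : y^-1 * z \in A by rewrite groupM ?groupV.
have -> : (x * f (x^-1 * y))^-1 * (x * f (x^-1 * z)) = f (y^-1 * z).
  rewrite invMg -mulgA mulKg -perm_morphV // -fM ?groupV //.
  by rewrite invMg invgK mulgA mulgK.
by rewrite (mulgA x^-1) fM ?mem_perm_stable // mulgA.
Qed.

End GroupQuandle.

Section CocycleExtension.
Variables (gT : finGroupType) (A : {group gT}) (f : {perm gT}).
Hypotheses (fM : {in A &, {morph f : x y / x * y}}) (fA : f @: A = A).
Variables (S : Type) (th : gT -> gT -> S -> S).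
Hypothesis th_cocycle : qcocycle A (qop f) th.
Implicit Types (x y z c : gT) (s t : S) (e : gT * S) (w : seq (gT * bool)).

(* Left translations of Q(A, f) and of the extension A x_th S, extended by the identity
   off A so that the first coordinate of cact x is qact x. *)
Definition qact x z := if z \in A then qop f x z else z.
Definition qactV x z := if z \in A then qopV f x z else z.

Definition thV x y t := epsilon (inhabits t) (fun s => th x y s = t).

Definition cact x e := let: (z, s) := e in if z \in A then (qop f x z, th x z s) else e.
Definition cactV x e :=
  let: (z, t) := e in if z \in A then (qopV f x z, thV x (qopV f x z) t) else e.

Local Notation qev := (wact qact qactV).
Local Notation cev := (wact cact cactV).

Let qopA x z : x \in A -> (qop f x z \in A) = (z \in A).
Proof. exact: qop_mem. Qed.

Let qopVA x z : x \in A -> (qopV f x z \in A) = (z \in A).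
Proof. exact: qopV_mem. Qed.

Let thKV x y : x \in A -> y \in A -> cancel (thV x y) (th x y).
Proof.
move=> Ax Ay t; case: th_cocycle => th_bij _ _; have [g _ gK] := th_bij x y Ax Ay.
by apply: (epsilon_spec (inhabits t) (fun s => th x y s = t)); exists (g t); rewrite gK.
Qed.

Let thK x y : x \in A -> y \in A -> cancel (th x y) (thV x y).
Proof.
move=> Ax Ay s; case: th_cocycle => th_bij _ _.
by apply: (bij_inj (th_bij x y Ax Ay)); rewrite thKV.
Qed.

Lemma qactE x z : z \in A -> qact x z = qop f x z.
Proof. by rewrite /qact => ->. Qed.

Lemma qactVE x z : z \in A -> qactV x z = qopV f x z.
Proof. by rewrite /qactV => ->. Qed.

Lemma qactK x : x \in A -> cancel (qact x) (qactV x).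
Proof.
by move=> Ax z; rewrite /qact /qactV; case Az: (z \in A); rewrite /= ?qopA // Az ?qopK.
Qed.

Lemma qactVK x : x \in A -> cancel (qactV x) (qact x).
Proof.
by move=> Ax z; rewrite /qact /qactV; case Az: (z \in A); rewrite /= ?qopVA // Az ?qopVK.
Qed.

Lemma cactK x : x \in A -> cancel (cact x) (cactV x).
Proof.
by move=> Ax [z s] /=; case Az: (z \in A); rewrite /= ?qopA // Az ?qopK ?thK.
Qed.

Lemma cactVK x : x \in A -> cancel (cactV x) (cact x).
Proof.
by move=> Ax [z t] /=; case Az: (z \in A); rewrite /= ?qopVA // Az ?qopVK ?thKV ?qopVA.
Qed.

Let qevK w : word_over A w -> cancel (qev w) (qev (winv w)).
Proof. exact: wact_winvK qactK qactVK w. Qed.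

Let cevK w : word_over A w -> cancel (cev w) (cev (winv w)).
Proof. exact: wact_winvK cactK cactVK w. Qed.

Let cevKV w : word_over A w -> cancel (cev (winv w)) (cev w).
Proof. exact: wact_winvKV cactK cactVK w. Qed.

Lemma cact_fst x e : (cact x e).1 = qact x e.1.
Proof. by case: e => z s; rewrite /qact /=; case: ifP. Qed.

Lemma cactV_fst x e : (cactV x e).1 = qactV x e.1.
Proof. by case: e => z s; rewrite /qactV /=; case: ifP. Qed.

Lemma cev_fst w e : (cev w e).1 = qev w e.1.
Proof. by elim: w => //= -[x []] w <-; rewrite /letter_act /= ?cact_fst ?cactV_fst. Qed.

Lemma qev_mem (B : {group gT}) w z : f @: B = B -> B \subset A ->
  word_over B w -> z \in B -> qev w z \in B.
Proof.
move=> fB sBA; elim: w => //= -[x b] w IHw /andP[/= Bx Bw] Bz.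
have Au := subsetP sBA _ (IHw Bw Bz).
by case: b; rewrite /letter_act /= ?qactE ?qactVE // ?(qop_mem _ fB Bx) ?(qopV_mem _ fB Bx) IHw.
Qed.

Lemma cact_comm x y e : x \in A -> y \in A ->
  cact y (cact x e) = cact (qop f y x) (cact y e).
Proof.
move=> Ax Ay; case: e => z s /=; case: ifP => Az; rewrite /= ?Az //.
rewrite !qopA // Az (qop_dist fM fA) //; congr (_, _).
by case: th_cocycle => _ th_op _; rewrite th_op.
Qed.

Lemma cactV_comm x y e : x \in A -> y \in A ->
  cactV y (cact x e) = cact (qopV f y x) (cactV y e).
Proof.
move=> Ax Ay; have Ax' : qopV f y x \in A by rewrite qopVA.
by apply: (can_inj (cactK Ay)); rewrite cactVK // cact_comm // qopVK cactVK.
Qed.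

Lemma cev_conj w x e : word_over A w -> x \in A ->
  cev w (cact x e) = cact (qev w x) (cev w e).
Proof.
elim: w => //= -[y b] w IHw /andP[/= Ay Aw] Ax.
have Au : qev w x \in A by apply: qev_mem.
rewrite IHw // /letter_act; case: b => /=; rewrite ?qactE ?qactVE //.
  exact: cact_comm.
exact: cactV_comm.
Qed.

Lemma cev_conjV w x e : word_over A w -> x \in A ->
  cev w (cactV x e) = cactV (qev w x) (cev w e).
Proof.
move=> Aw Ax; have Au : qev w x \in A by apply: qev_mem.
by apply: (can_inj (cactK Au)); rewrite -cev_conj ?cactVK.
Qed.

Lemma cev_central n w e : word_over A n -> {in A, forall z, qev n z = z} ->
  word_over A w -> cev n (cev w e) = cev w (cev n e).
Proof.
move=> An n_id; elim: w => //= -[x b] w IHw /andP[/= Ax Aw].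
have n_cact e' : cev n (cact x e') = cact x (cev n e') by rewrite cev_conj ?n_id.
rewrite /letter_act -IHw //; case: b => /=; first exact: n_cact.
by apply: (can_inj (cactK Ax)); rewrite -n_cact !cactVK.
Qed.

Lemma cact_dword x e : x \in A -> cact x e = cev (dword x) (cact 1 e).
Proof. by move=> Ax; rewrite /= /letter_act /= cactK. Qed.

Lemma cact1_cev w e : cact 1 (cev w e) = cev (conj1 w) (cact 1 e).
Proof. by rewrite /conj1 !wact_cat /= /letter_act /= cactK. Qed.

Lemma cact1_fibre1 s : cact 1 (1, s) = (1, s).
Proof. by case: th_cocycle => _ _ th1; rewrite /= group1 qop1 (perm_morph1 fM) th1. Qed.

Definition translates (B : {set gT}) w c :=
  [/\ word_over B w, c \in B & {in A, forall z, qev w z = c * z}].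

Section Translations.
Variable B : {group gT}.
Hypotheses (fB : f @: B = B) (sBA : B \subset A).
Implicit Types (u v h : gT).

Let BA u : u \in B -> u \in A. Proof. exact: (subsetP sBA). Qed.

Lemma translatesS (C : {set gT}) w c : B \subset C -> translates B w c -> translates C w c.
Proof. by move=> sBC [Bw Bc wE]; split; rewrite ?(word_overS sBC) ?(subsetP sBC). Qed.

Lemma translates_qev w c z : translates B w c -> z \in A -> qev w z = c * z.
Proof. by case=> _ _ wE; apply: wE. Qed.

Lemma translates_qev1 w c : translates B w c -> qev w 1 = c.
Proof. by case=> _ _ wE; rewrite wE ?mulg1. Qed.

Lemma translates_nil : translates B [::] 1.
Proof. by split=> // z _; rewrite mul1g. Qed.

Lemma translates_cat w1 w2 c1 c2 : translates B w1 c1 -> translates B w2 c2 ->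
  translates B (w1 ++ w2) (c1 * c2).
Proof.
move=> [Bw1 Bc1 w1E] [Bw2 Bc2 w2E]; split=> [| | z Az]; rewrite ?word_over_cat ?Bw1 ?groupM //.
have Ac2z : c2 * z \in A := groupM (BA Bc2) Az.
by rewrite wact_cat w2E // w1E // mulgA.
Qed.

Lemma translates_winv w c : translates B w c -> translates B (winv w) c^-1.
Proof.
move=> [Bw Bc wE]; split=> [| | z Az]; rewrite ?word_over_winv ?groupV //.
have Acz : c^-1 * z \in A := groupM (BA (groupVr Bc)) Az.
by rewrite -{1}(mulKVg c z) -wE // qevK // (word_overS sBA).
Qed.

Lemma translates_wpow w c m : translates B w c -> translates B (wpow w m) (c ^+ m).
Proof.
move=> tw; elim: m => [|m IHm]; first exact: translates_nil.
by rewrite expgS; apply: translates_cat.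
Qed.

Lemma translates_dword x : x \in B -> translates B (dword x) (x * (f x)^-1).
Proof.
move=> Bx; split=> [| | z Az]; rewrite /= ?Bx ?group1 ?groupM ?groupV ?(mem_perm_stable fB) //.
have Afz : f^-1 z \in A by rewrite (mem_perm_stableV fA).
by rewrite /letter_act /= qactVE // qopV1 qactE // (qopE fM (BA Bx) Afz) permKV.
Qed.

Lemma translates_conj1 w c : translates B w c -> translates B (conj1 w) (f c).
Proof.
move=> [Bw Bc wE]; split=> [| | z Az]; rewrite ?(mem_perm_stable fB) //.
  by rewrite /conj1 !word_over_cat Bw /= group1.
have Afz : f^-1 z \in A by rewrite (mem_perm_stableV fA).
have Acz : c * f^-1 z \in A := groupM (BA Bc) Afz.
rewrite /conj1 !wact_cat /= /letter_act /= qactVE // qopV1 wE // qactE // qop1.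
by rewrite (fM (BA Bc) Afz) permKV.
Qed.

Lemma translates_commutator w1 w2 c1 c2 : translates B w1 c1 -> translates B w2 c2 ->
  commute c1 c2 -> translates B (w1 ++ w2 ++ winv w1 ++ winv w2) 1.
Proof.
move=> t1 t2 c12; rewrite -(mulgV (c1 * c2)) {2}c12 invMg -mulgA.
by do 3!apply: translates_cat => //; apply: translates_winv.
Qed.

Lemma translates1_commute n w : translates B n 1 -> word_over A w ->
  forall e, cev n (cev w e) = cev w (cev n e).
Proof.
case=> Bn _ nE Aw e; apply: cev_central => //; first exact: word_overS Bn.
by move=> z Az; rewrite nE ?mul1g.
Qed.

Lemma translates_lift : qconnected B (qop f) -> forall h, h \in B -> exists w, translates B w h.
Proof.
move=> conB h Bh; pose R u := exists w, translates B w u.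
have R1 : R 1 by exists [::]; apply: translates_nil.
have RM u v : R u -> R v -> R (u * v).
  by move=> [w1 t1] [w2 t2]; exists (w1 ++ w2); apply: translates_cat.
have RV u : R u -> R u^-1 by move=> [w t]; exists (winv w); apply: translates_winv.
have RD x : x \in B -> R (x * (f x)^-1) by move=> Bx; exists (dword x); apply: translates_dword.
have RF u : R u -> R (f u) by move=> [w t]; exists (conj1 w); apply: translates_conj1.
have RFV u : u \in B -> R (f u) -> R u by move=> Bu /(RM _ _ (RD u Bu)); rewrite mulgKV.
suff: forall a b, clos_refl_trans gT (lstep B (qop f)) a b -> a \in B -> R a -> b \in B /\ R b.
  by move/(_ 1 h (conB 1 h (group1 B) Bh) (group1 B) R1) => [].
move=> a b; elim=> {a b} [a b [x Bx [-> | abE]] | a | a b c _ IHab _ IHbc] Ba Ra //.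
- split; first by rewrite qop_mem.
  by rewrite (qopE fM (BA Bx) (BA Ba)); apply: RM (RD x Bx) (RF a Ra).
- have Bb : b \in B by rewrite -(qop_mem _ fB Bx) -abE.
  split=> //; apply: (RFV _ Bb).
  have -> : f b = (x * (f x)^-1)^-1 * a by rewrite abE (qopE fM (BA Bx) (BA Bb)) mulKg.
  exact: RM (RV _ (RD x Bx)) Ra.
- by have [Bb Rb] := IHab Ba Ra; apply: IHbc.
Qed.

Lemma cev_coboundary (gam : gT -> S -> S) w y s :
    {in B &, forall x y s, th x y (gam y s) = gam (qop f x y) s} ->
    word_over B w -> y \in B ->
  cev w (y, gam y s) = (qev w y, gam (qev w y) s).
Proof.
move=> gamP; elim: w => //= -[x b] w IHw /andP[/= Bx Bw] By; rewrite IHw //.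
have Bu : qev w y \in B by apply: qev_mem.
case: b; rewrite /letter_act /= BA // ?qactE ?qactVE ?BA //; first by rewrite gamP.
have Bv : qopV f x (qev w y) \in B by rewrite qopV_mem.
by rewrite -[in gam (qev w y) s](qopVK f x (qev w y)) -gamP // thK ?BA.
Qed.

Lemma translates_fibre1 w s : qcobound B (qop f) th -> translates B w 1 -> cev w (1, s) = (1, s).
Proof.
move=> [gam [gam_bij gamP]] tw; have [g _ gK] := gam_bij 1 (group1 B).
have [Bw _ _] := tw.
by rewrite -(gK s) (cev_coboundary _ gamP) // (translates_qev1 tw).
Qed.

End Translations.

(* gamma_g transports the fibre over 1 along rho g. *)
Lemma qcobound_of_transport (rho : gT -> seq (gT * bool)) :
    {in A, forall g, word_over A (rho g) /\ qev (rho g) 1 = g} ->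
    {in A &, forall x y s, cact x (cev (rho y) (1, s)) = cev (rho (qop f x y)) (1, s)} ->
  qcobound A (qop f) th.
Proof.
move=> rhoP rho_op; pose gam g s := (cev (rho g) (1, s)).2.
have rhoE g s : g \in A -> cev (rho g) (1, s) = (g, gam g s).
  by move=> /rhoP[_ rho1]; rewrite [LHS]surjective_pairing cev_fst rho1.
exists gam; split=> [y Ay | x y Ax Ay s].
  have [Aw rho1] := rhoP y Ay.
  exists (fun t => (cev (winv (rho y)) (y, t)).2) => [s | t] /=.
    by rewrite -rhoE // cevK.
  have fibre1 : cev (winv (rho y)) (y, t) = (1, (cev (winv (rho y)) (y, t)).2).
    by rewrite [LHS]surjective_pairing cev_fst /= -[X in qev _ X]rho1 qevK.
  by have := cevKV Aw (y, t); rewrite fibre1 rhoE // => -[].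
have Axy : qop f x y \in A by rewrite qopA.
by have := rho_op x y Ax Ay s; rewrite !rhoE //= Ay => -[].
Qed.

Section DirectProduct.
Variables H K : {group gT}.
Hypotheses (HxK : H \x K = A) (fH : f @: H = H) (fK : f @: K = K).
Hypothesis coHK : coprime #|H| #|K|.
Hypotheses (scH : qsimply_connected H (qop f)) (scK : qsimply_connected K (qop f)).

Let sHA : H \subset A. Proof. by have [/andP[]] := dprod_normal2 HxK. Qed.
Let sKA : K \subset A. Proof. by have [_ /andP[]] := dprod_normal2 HxK. Qed.

Let cHK u v : u \in H -> v \in K -> commute u v.
Proof. by have [_ _ cKH _] := dprodP HxK; move=> Hu /(subsetP cKH)/centP/(_ u Hu). Qed.

Let HK1 u : u \in H -> u \in K -> u = 1.
Proof. by have [_ _ _ tiHK] := dprodP HxK; move=> Hu Ku; apply/set1gP; rewrite -tiHK inE Hu Ku. Qed.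

Let mulHK : H * K = A. Proof. exact: dprodW HxK. Qed.

Let qcobound_sc (B : {group gT}) : B \subset A -> qsimply_connected B (qop f) ->
  qcobound B (qop f) th.
Proof. by move=> sBA [_ scB]; apply: scB; apply: qcocycleS th_cocycle. Qed.

Lemma translates_commute a b ca cb : translates H a ca -> translates K b cb ->
  forall e, cev a (cev b e) = cev b (cev a e).
Proof.
move=> ta tb; have tAa := translatesS sHA ta; have tAb := translatesS sKA tb.
have [[_ Hca _] [_ Kcb _]] := (ta, tb); have [[Aa _ _] [Ab _ _]] := (tAa, tAb).
have ta_pow : translates A (wpow a #|H|) 1 by rewrite -(expg_cardG Hca); apply: translates_wpow.
have tb_pow : translates A (wpow b #|K|) 1 by rewrite -(expg_cardG Kcb); apply: translates_wpow.
apply: (commute_of_coprime_powers (cevK Aa) (cevKV Aa) (cevK Ab) (cevKV Ab) _ _ (cardG_gt0 H) coHK).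
- move=> e'; have tab := translates_commutator (subxx A) tAa tAb (cHK Hca Kcb).
  by have := translates1_commute (subxx A) tab Aa e'; rewrite !wact_cat.
- move=> e'; have tba := translates_commutator (subxx A) tAb tAa (esym (cHK Hca Kcb)).
  by have := translates1_commute (subxx A) tba Ab e'; rewrite !wact_cat.
- by move=> e'; rewrite -!wact_wpow (translates1_commute (subxx A) ta_pow Ab).
- by move=> e'; rewrite -!wact_wpow (translates1_commute (subxx A) tb_pow Aa).
Qed.

Lemma cev_dword_mul h k e : h \in H -> k \in K ->
  cev (dword (h * k)) e = cev (dword h) (cev (dword k) e).
Proof.
move=> Hh Kk; have [bk tk] := translates_lift fK sKA scK.1 Kk.
have [Abk _ _] := translatesS sKA tk.
have [Ah Ak] := (subsetP sHA h Hh, subsetP sKA k Kk).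
(* Conjugating L_h L_1^-1 by a word translating by k turns it into L_(kh) L_k^-1. *)
have dword_h e' : cev (dword h) e' = cact (k * h) (cactV k e').
  rewrite -{1}(cevKV Abk e') (translates_commute (translates_dword fH sHA Hh) tk).
  rewrite /= /letter_act /= cev_conj ?cev_conjV ?group1 ?cevKV //.
  by rewrite (translates_qev tk Ah) (translates_qev1 tk).
by rewrite dword_h /= /letter_act /= cactK // (cHK Hh Kk).
Qed.

Lemma cact_transport x a b a2 b2 ca cb ca2 cb2 s : x \in A ->
    translates H a ca -> translates K b cb -> translates H a2 ca2 -> translates K b2 cb2 ->
    ca2 * cb2 = qop f x (ca * cb) ->
  cact x (cev (a ++ b) (1, s)) = cev (a2 ++ b2) (1, s).
Proof.
move=> Ax ta tb ta2 tb2 c2E.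
have tab := translates_cat (subxx A) (translatesS sHA ta) (translatesS sKA tb).
have tab2 := translates_cat (subxx A) (translatesS sHA ta2) (translatesS sKA tb2).
have [[Aab2 Acc2 _] [_ Acc _]] := (tab2, tab).
have Hh : divgr H K x \in H by rewrite mem_divgr ?mulHK.
have Kk : remgr H K x \in K by rewrite mem_remgr ?mulHK.
set h := divgr H K x in Hh *; set k := remgr H K x in Kk *.
pose wa := winv a2 ++ dword h ++ conj1 a; pose wb := winv b2 ++ dword k ++ conj1 b.
have [da tda] : exists c, translates H wa c := ex_intro _ _ (translates_cat sHA
  (translates_winv sHA ta2)
  (translates_cat sHA (translates_dword fH sHA Hh) (translates_conj1 fH sHA ta))).
have [db tdb] : exists c, translates K wb c := ex_intro _ _ (translates_cat sKA
  (translates_winv sKA tb2)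
  (translates_cat sKA (translates_dword fK sKA Kk) (translates_conj1 fK sKA tb))).
have back : cev (winv (a2 ++ b2)) (cact x (cev (a ++ b) (1, s))) = cev wa (cev wb (1, s)).
  have hkA : h * k \in A by rewrite -divgr_eq.
  rewrite (divgr_eq H K x) cact_dword // cev_dword_mul // wact_cat !cact1_cev cact1_fibre1.
  rewrite -(translates_commute (translates_conj1 fH sHA ta) (translates_dword fK sKA Kk)).
  rewrite winv_cat wact_cat.
  transitivity (cev (winv b2) (cev wa (cev (dword k) (cev (conj1 b) (1, s))))).
    by rewrite /wa !wact_cat.
  by rewrite -(translates_commute tda (translates_winv sKA tb2)) /wb !wact_cat.
(* On first coordinates, back says that wa ++ wb translates 1 to 1. *)
have dadb1 : da * db = 1.
  have := congr1 fst back; rewrite !(cev_fst, cact_fst) /= (translates_qev1 tab) qactE //.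
  rewrite -c2E (translates_qev (translates_winv (subxx A) tab2)) ?mulVg //.
  have [_ Kdb _] := tdb.
  by rewrite (translates_qev1 tdb) (translates_qev tda) ?(subsetP sKA).
have [_ Hda _] := tda; have [_ Kdb _] := tdb.
have daV : da^-1 = db by apply/eqP; rewrite eq_invg_mul dadb1.
have da1 : da = 1 by apply: HK1; rewrite // -groupV daV.
have db1 : db = 1 by rewrite da1 mul1g in dadb1.
rewrite da1 in tda; rewrite db1 in tdb.
rewrite (translates_fibre1 fK sKA _ (qcobound_sc sKA scK) tdb) in back.
rewrite (translates_fibre1 fH sHA _ (qcobound_sc sHA scH) tda) in back.
by rewrite -[in RHS]back cevKV.
Qed.

Lemma qcobound_dprod : qcobound A (qop f) th.
Proof.
pose lift (B : {group gT}) h := epsilon (inhabits [::]) (fun w => translates B w h).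
have liftP (B : {group gT}) h : f @: B = B -> B \subset A -> qsimply_connected B (qop f) ->
    h \in B -> translates B (lift B h) h.
  move=> fB sBA [conB _] Bh; apply: (epsilon_spec _ (fun w => translates B w h)).
  exact: translates_lift.
have liftH g : g \in A -> translates H (lift H (divgr H K g)) (divgr H K g).
  by move=> Ag; apply: (liftP H _ fH sHA scH); rewrite mem_divgr ?mulHK.
have liftK g : g \in A -> translates K (lift K (remgr H K g)) (remgr H K g).
  by move=> Ag; apply: (liftP K _ fK sKA scK); rewrite mem_remgr ?mulHK.
apply: (qcobound_of_transport (rho := fun g => lift H (divgr H K g) ++ lift K (remgr H K g))).
  move=> g Ag; have tg := translates_cat (subxx A)
    (translatesS sHA (liftH g Ag)) (translatesS sKA (liftK g Ag)).
  by have [Ag_w _ _] := tg; rewrite (translates_qev1 tg) -divgr_eq.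
move=> x y Ax Ay s; have Axy : qop f x y \in A by rewrite qopA.
apply: (cact_transport s Ax (liftH _ Ay) (liftK _ Ay) (liftH _ Axy) (liftK _ Axy)).
by rewrite -!divgr_eq.
Qed.

End DirectProduct.

End CocycleExtension.

Lemma qsimply_connected_dprod (gT : finGroupType) (A H K : {group gT}) (f : {perm gT}) :
    {in A &, {morph f : x y / x * y}} -> f @: A = A -> f @: H = H -> f @: K = K ->
    H \x K = A -> coprime #|H| #|K| -> qconnected A (qop f) ->
    qsimply_connected H (qop f) -> qsimply_connected K (qop f) -> qsimply_connected A (qop f).
Proof.
move=> fM fA fH fK HxK coHK conA scH scK; split=> // S th th_cocycle.
exact: (qcobound_dprod fM fA th_cocycle HxK fH fK coHK scH scK).
Qed.

Section DirectFactor.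
Variables (gT : finGroupType) (A H K : {group gT}) (f : {perm gT}).
Hypotheses (fM : {in A &, {morph f : x y / x * y}}) (fA : f @: A = A).
Hypotheses (fH : f @: H = H) (fK : f @: K = K) (HxK : H \x K = A).

Let sHA : H \subset A. Proof. by have [/andP[]] := dprod_normal2 HxK. Qed.
Let sKA : K \subset A. Proof. by have [_ /andP[]] := dprod_normal2 HxK. Qed.

Let divgrH g : g \in A -> divgr H K g \in H.
Proof. by have [_ mulHK _ _] := dprodP HxK; rewrite -mulHK; apply: mem_divgr. Qed.

Lemma divgr_qop : {in A &, forall x y, divgr H K (qop f x y) = qop f (divgr H K x) (divgr H K y)}.
Proof.
have [_ mulHK cKH tiHK] := dprodP HxK.
have pM : morphic A (divgr H K) by apply/morphicP/divgrM => //; apply/complP.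
have pV : {in A, {morph divgr H K : u / u^-1}} := morphV (morphm_morphism pM).
have fAm u : u \in A -> f u \in A by move=> Au; rewrite (mem_perm_stable fA).
have p_f g : g \in A -> divgr H K (f g) = f (divgr H K g).
  rewrite -mulHK => /mulsgP[h k Hh Kk ->].
  have [fHh fKk] : f h \in H /\ f k \in K by rewrite (mem_perm_stable fH) (mem_perm_stable fK).
  by rewrite (fM (subsetP sHA _ Hh) (subsetP sKA _ Kk)) !(divgrMid tiHK).
move=> x y Ax Ay; have [Hx Hy] := (divgrH Ax, divgrH Ay).
rewrite (qopE fM Ax Ay) (qopE fM (subsetP sHA _ Hx) (subsetP sHA _ Hy)).
by rewrite !(morphicP pM) ?groupM ?groupV ?fAm // pV ?fAm // !p_f.
Qed.

Let qopA : {in A, forall x z, (qop f x z \in A) = (z \in A)}.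
Proof. by move=> x Ax z; apply: qop_mem. Qed.

Let divgr_idH : {in H, divgr H K =1 id}.
Proof. by move=> h; apply: divgr_id. Qed.

Lemma qconnected_dprodl : qconnected A (qop f) -> qconnected H (qop f).
Proof. exact: (qconnected_retract sHA qopA divgrH divgr_idH divgr_qop). Qed.

Lemma qsimply_connected_dprodl : qsimply_connected A (qop f) -> qsimply_connected H (qop f).
Proof. exact: (qsimply_connected_retract sHA qopA divgrH divgr_idH divgr_qop). Qed.

End DirectFactor.

Section NilpotentQuandle.
Variables (gT : finGroupType) (G : {group gT}) (f : {perm gT}).
Hypotheses (nilG : nilpotent G) (AutGf : f \in Aut G) (conG : qconnected G (qop f)).

Let fM : {in G &, {morph f : x y / x * y}} := morphicP (Aut_morphic AutGf).

Let fM_sub (B : {group gT}) : B \subset G -> {in B &, {morph f : x y / x * y}}.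
Proof. by move/subsetP/sub_in2; apply. Qed.

Let fO pi : f @: 'O_pi(G) = 'O_pi(G).
Proof. exact: char_perm_stable AutGf (pcore_char pi G). Qed.

Let fG : f @: G = G.
Proof. exact: char_perm_stable AutGf (char_refl G). Qed.

Lemma qconnected_pcore pi : qconnected 'O_pi(G) (qop f).
Proof. exact: (qconnected_dprodl fM fG (fO _) (fO _) (nilpotent_pcoreC pi nilG) conG). Qed.

Lemma qsimply_connected_pcore p : qsimply_connected G (qop f) -> qsimply_connected 'O_p(G) (qop f).
Proof. exact: (qsimply_connected_dprodl fM fG (fO _) (fO _) (nilpotent_pcoreC p nilG)). Qed.

Lemma qsimply_connected_pcore_of_primes pi :
    (forall p, prime p -> p %| #|G| -> qsimply_connected 'O_p(G) (qop f)) ->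
  qsimply_connected 'O_pi(G) (qop f).
Proof.
move=> scO; move: {2}#|_| (leqnn #|'O_pi(G)|) => n; elim: n pi => [|n IHn] pi le_On.
  by move: le_On; rewrite leqNgt cardG_gt0.
set O := 'O_pi(G); have sOG : O \subset G := pcore_sub pi G.
have [O_le1 | O_gt1] := leqP #|O| 1; first exact: qsimply_connected_card_le1.
set p := pdiv #|O|; have p_pr : prime p := pdiv_prime O_gt1.
have p_pi : p \in pi.
  by apply: (pnatPpi (pcore_pgroup pi G)); rewrite mem_primes p_pr cardG_gt0 pdiv_dvd.
have OpE : 'O_p(O) = 'O_p(G).
  by rewrite -pcoreI; apply: eq_pcore => q; rewrite !inE; case: eqP => // ->.
have Op'E : 'O_p^'(O) = 'O_[predI p^' & pi](G) by rewrite -pcoreI.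
have fOO sigma : f @: 'O_sigma(O) = 'O_sigma(O).
  exact: char_perm_stable AutGf (char_trans (pcore_char sigma O) (pcore_char pi G)).
have OpxOp' := nilpotent_pcoreC p (nilpotentS sOG nilG).
apply: (qsimply_connected_dprod (fM_sub sOG) (fO pi) (fOO _) (fOO _) OpxOp').
- exact: pnat_coprime (pcore_pgroup _ _) (pcore_pgroup _ _).
- exact: qconnected_pcore.
- by rewrite /= OpE; apply: scO; rewrite // (dvdn_trans (pdiv_dvd _) (cardSg sOG)).
rewrite /= Op'E; apply: IHn; rewrite -Op'E -ltnS (leq_trans _ le_On) // ltn_neqAle.
rewrite subset_leq_card ?pcore_sub // andbT; apply/eqP => Op'_eq.
by have := pcore_pgroup p^' O; rewrite /pgroup Op'_eq p'natE // pdiv_dvd.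
Qed.

End NilpotentQuandle.

Theorem theorem3p13 (gT : finGroupType) (G : {group gT}) (f : {perm gT}) :
  nilpotent G -> f \in Aut G -> qconnected G (qop f) ->
  (qsimply_connected G (qop f) <->
   forall (p : nat) (Sp : {group gT}), prime p -> p %| #|G| ->
     p.-Sylow(G) Sp -> qsimply_connected Sp (qop f)).
Proof.
move=> nilG AutGf conG; split=> [scG p Sp _ _ sylSp | scSyl].
  by rewrite (nilpotent_Hall_pcore nilG sylSp); apply: qsimply_connected_pcore.
rewrite -(pcore_pgroup_id (pgroup_pi G)).
apply: qsimply_connected_pcore_of_primes => // p p_pr p_dvd.
exact: scSyl p_pr p_dvd (nilpotent_pcore_Hall p nilG).
Qed.
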